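(* Let $e\in\mathcal{PA}_n$ with $\mathrm{asc}(e)=k$. Then $e$ avoids the pattern $\underline{12}0$ if and only if its tail sequence $\mathbf{t}(e)$, which is an element of $\mathbf{I}_{k+1}$, is non-decreasing.
   Context: An inversion sequence of length $n$ is an integer sequence $e=e_1\ldots e_n$ with $0\leq e_i<i$; their set is $\mathbf{I}_n$. $\mathrm{asc}(e_1\ldots e_i)=|\{\ell\in[i-1]:e_\ell<e_{\ell+1}\}|$. An ascent sequence is an $e\in\mathbf{I}_n$ with $e_{i+1}\leq\mathrm{asc}(e_1\ldots e_i)+1$ for all $1\le i<n$. It is primitive if $e_i\neq e_{i+1}$ for all $i\in[n-1]$; $\mathcal{PA}_n$ denotes the set of primitive ascent sequences of length $n$. For a primitive ascent sequence $e$, partition $e$ uniquely into maximal strictly decreasing consecutive blocks called runs (e.g. $0102324325=0/10/2/32/432/5$); the tail sequence $\mathbf{t}(e)$ is the sequence of least (i.e. last) entries of the runs, in order (e.g. $002225$). A sequence $e$ avoids $\underline{12}0$ if there are no indices $2\leq i<j\leq n$ with $e_j<e_{i-1}<e_i$. *)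

(* Sequences are 0-indexed: position i (0-based) holds e_{i+1}. *)
From mathcomp Require Import all_boot.
Set Implicit Arguments. Unset Strict Implicit. Unset Printing Implicit Defensive.

(* e in I_n : size n and e_i < i (1-based), i.e. nth 0 e i <= i (0-based). *)
Definition inversion_seq (n : nat) (e : seq nat) : Prop :=
  size e = n /\ forall i, i < n -> nth 0 e i < i.+1.

Definition asc (s : seq nat) : nat :=
  count (fun l => nth 0 s l < nth 0 s l.+1) (iota 0 (size s).-1).

Definition ascent_seq (n : nat) (e : seq nat) : Prop :=
  inversion_seq n e /\
  forall i, 1 <= i < n -> nth 0 e i <= (asc (take i e)).+1.

Definition primitive (e : seq nat) : Prop :=
  forall i, i.+1 < size e -> nth 0 e i != nth 0 e i.+1.

Definition primitive_ascent (n : nat) (e : seq nat) : Prop :=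
  ascent_seq n e /\ primitive e.

(* decomposition into maximal strictly decreasing consecutive blocks *)
Fixpoint runs (s : seq nat) : seq (seq nat) :=
  match s with
  | [::] => [::]
  | x :: s' =>
      match runs s' with
      | (y :: r) :: rs => if y < x then (x :: y :: r) :: rs
                          else [:: x] :: (y :: r) :: rs
      | rs => [:: x] :: rs
      end
  end.

Definition tail_seq (e : seq nat) : seq nat := map (last 0) (runs e).

(* avoidance of the vincular pattern 12_0 (underlined 12):
   no 2 <= i < j <= n (1-based) with e_j < e_{i-1} < e_i.
   0-based: no 1 <= i < j < size e with e[j] < e[i-1] < e[i]. *)
Definition avoids_u12_0 (e : seq nat) : Prop :=
  ~ exists i j, [/\ 1 <= i, i < j, j < size e &
                    nth 0 e j < nth 0 e i.-1 < nth 0 e i].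

Example runs_ex : runs [:: 0;1;0;2;3;2;4;3;2;5] =
  [:: [:: 0]; [:: 1;0]; [:: 2]; [:: 3;2]; [:: 4;3;2]; [:: 5]].
Proof. by []. Qed.
Example tail_ex : tail_seq [:: 0;1;0;2;3;2;4;3;2;5] = [:: 0;0;2;2;2;5].
Proof. by []. Qed.

(** A word [x :: y :: s] contains an occurrence of
    12_0 iff [y :: s] does, or [x < y] and some entry of [s] is below [x].
    On the tail side, if [y < x] then [x] joins the run starting at [y] and the
    tail sequence does not change, while if [x < y] (primitivity excludes
    [x = y]) [x] is a run of its own, prepended to [t(y :: s)]. The result is
    sorted iff [t(y :: s)] is sorted with all entries at least [x], and since
    every entry of [s] is bounded below by the last entry of its run, this
    says that no entry of [s] is below [x]. *)

From mathcomp Require Import all_boot.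

Set Implicit Arguments.
Unset Strict Implicit.
Unset Printing Implicit Defensive.

Definition u12_0_occurs (e : seq nat) : Prop :=
  exists i j, [/\ 1 <= i, i < j, j < size e &
                  nth 0 e j < nth 0 e i.-1 < nth 0 e i].

Fixpoint u12_0_freeb (s : seq nat) : bool :=
  match s with
  | x :: ((y :: s') as t) => u12_0_freeb t && ((x < y) ==> all (leq x) s')
  | _ => true
  end.

Lemma u12_0_occurs_small s : size s <= 1 -> ~ u12_0_occurs s.
Proof.
move=> small [i [j [le1i lt_ij lt_j _]]].
by have := leq_trans (leq_ltn_trans le1i lt_ij) (leq_trans lt_j small).
Qed.

Lemma u12_0_occurs_cons2 x y s :
  u12_0_occurs [:: x, y & s] <->
  u12_0_occurs (y :: s) \/ (x < y /\ exists2 z, z \in s & z < x).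
Proof.
split.
- case=> [[|[|i]] [j [//= _ lt_ij lt_j /andP[lt_jx lt_xi]]]].
  + right; case: j lt_ij lt_j lt_jx lt_xi => [|[|j]] //= _ lt_j lt_zx lt_xy.
    by split=> //; exists (nth 0 s j); rewrite ?mem_nth // -2!ltnS.
  + left; case: j lt_ij lt_j lt_jx lt_xi => [|j] //= lt_ij lt_j lt_jx lt_xi.
    by exists i.+1, j; split; rewrite //= lt_jx.
- case=> [[i [j [le1i lt_ij lt_j lt_val]]]|[lt_xy [z z_s lt_zx]]].
  + by exists i.+1, j.+1; split=> //; case: i le1i {lt_ij} lt_val.
  + exists 1, (index z s).+2; split; rewrite //= ?ltnS ?index_mem //.
    by rewrite nth_index // lt_zx lt_xy.
Qed.

Lemma avoids_u12_0P e : avoids_u12_0 e <-> u12_0_freeb e.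
Proof.
rewrite /avoids_u12_0 -/(u12_0_occurs e).
elim: e => [|x [|y s] IH]; try by split=> // _; apply: u12_0_occurs_small.
have occE := u12_0_occurs_cons2 x y s.
rewrite /=; split.
- move=> free; apply/andP; split.
    by apply/IH => occ; apply/free/occE; left.
  apply/implyP => lt_xy; apply/allP => z z_s; rewrite leqNgt.
  by apply/negP => lt_zx; apply/free/occE; right; split=> //; exists z.
- case/andP=> /IH free_ys /implyP free_x /occE[//|[/free_x /allP le_x [z /le_x]]].
  by rewrite leqNgt => /negbTE->.
Qed.

Lemma runs_cons_head y s : exists r rs, runs (y :: s) = (y :: r) :: rs.
Proof.
rewrite /=; case: (runs s) => [|[|z r] rs]; try by do 2 eexists.
by case: ifP; do 2 eexists.
Qed.

Lemma tail_seq_cons2 x y s :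
  tail_seq [:: x, y & s] =
  if y < x then tail_seq (y :: s) else x :: tail_seq (y :: s).
Proof.
have [r [rs runs_ys]] := runs_cons_head y s.
by rewrite /tail_seq /= -/(runs (y :: s)) runs_ys; case: ifP.
Qed.

Lemma tail_seq_subset s : {subset tail_seq s <= s}.
Proof.
elim: s => [|x [|y s] IH] // z; rewrite tail_seq_cons2 in_cons.
case: ifP => _; first by move/IH->; rewrite orbT.
by rewrite in_cons => /orP[->//|/IH->]; rewrite orbT.
Qed.

Lemma tail_seq_lower_bound s z : z \in s -> exists2 t, t \in tail_seq s & t <= z.
Proof.
elim: s z => [|x [|y s] IH] z //.
  by rewrite mem_seq1 => /eqP->; exists x; rewrite ?mem_seq1.
rewrite tail_seq_cons2 in_cons => /orP[/eqP->|z_ys]; case: ifP => lt_yx.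
- have [t t_tail le_ty] := IH y (mem_head _ _).
  by exists t; last exact: leq_trans le_ty (ltnW lt_yx).
- by exists x; rewrite ?mem_head.
- exact: IH.
- by have [t t_tail le_tz] := IH z z_ys; exists t; rewrite ?in_cons ?t_tail ?orbT.
Qed.

Lemma all_leq_tail_seq x s : all (leq x) (tail_seq s) = all (leq x) s.
Proof.
apply/allP/allP => le_x z z_s.
- by have [t /le_x le_xt le_tz] := tail_seq_lower_bound z_s; apply: leq_trans le_tz.
- exact/le_x/tail_seq_subset.
Qed.

Lemma primitive_behead x s : primitive (x :: s) -> primitive s.
Proof. by move=> prim i lt_i; apply: (prim i.+1). Qed.

Lemma u12_0_freebE e : primitive e -> u12_0_freeb e = sorted leq (tail_seq e).
Proof.
elim: e => [|x [|y s] IH] prim //.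
have ne_xy : x != y by apply: (prim 0).
rewrite /= -/(u12_0_freeb (y :: s)) tail_seq_cons2 (IH (primitive_behead prim)).
case: ifP => lt_yx; first by rewrite ltnNge (ltnW lt_yx) andbT.
have lt_xy : x < y by rewrite ltn_neqAle ne_xy leqNgt lt_yx.
rewrite lt_xy -[sorted _ (x :: _)]/(path leq x _) (path_sortedE leq_trans).
by rewrite all_leq_tail_seq /= (ltnW lt_xy) andbC.
Qed.

Theorem lemma2p1 (n k : nat) (e : seq nat) :
  primitive_ascent n e -> asc e = k ->
  (avoids_u12_0 e <-> sorted leq (tail_seq e)).
Proof.
move=> [_ prim] _.
by rewrite -u12_0_freebE //; apply: avoids_u12_0P.
Qed.
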